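(* Let $X$ be a $T_1$ space with $|X|<\mathfrak d$. Then $X$ is set strongly star Menger if and only if $e(X)=\omega$.
   Context: For a family $\mathcal U$ of subsets of $X$ and $A\subseteq X$, $st(A,\mathcal U)=\bigcup\{U\in\mathcal U: U\cap A\neq\emptyset\}$. $X$ is set strongly star Menger if for every nonempty $A\subseteq X$ and every sequence $(\mathcal U_n:n\in\omega)$ of families of open sets with $\overline A\subseteq\bigcup\mathcal U_n$ for all $n$, there are finite $F_n\subseteq\overline A$ with $A\subseteq\bigcup_n st(F_n,\mathcal U_n)$. $e(X)$ is the supremum of cardinalities of closed discrete subsets of $X$ ($e(X)=\omega$ means every closed discrete subset is countable). $\mathfrak d$ is the minimal cardinality of a cofinal subset of $(\omega^\omega,\leq^* )$. *)

From HB Require Import structures.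
From mathcomp Require Import all_boot all_order all_algebra.
From mathcomp Require Import all_classical all_reals topology.
Set Implicit Arguments. Unset Strict Implicit. Unset Printing Implicit Defensive.
Local Open Scope classical_set_scope.

Definition le_star (g f : nat -> nat) : Prop :=
  exists N : nat, forall n : nat, (N <= n)%N -> (g n <= f n)%N.

Definition dominating (D : set (nat -> nat)) : Prop :=
  forall g : nat -> nat, exists2 f, D f & le_star g f.

(* |X| < d : since d is the least cardinality of a dominating family
   (the minimum is attained), |X| < d iff |X| < |D| for every dominating D. *)
Definition card_lt_dominating (X : Type) : Prop :=
  forall D : set (nat -> nat), dominating D ->
    ((([set: X] #<= D)%card : Prop) /\ ~ ((D #<= [set: X])%card : Prop)).

Definition star {X : Type} (A : set X) (U : set (set X)) : set X :=
  \bigcup_(V in [set V | U V /\ V `&` A !=set0]) V.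

Definition set_strongly_star_Menger (X : topologicalType) : Prop :=
  forall A : set X, A !=set0 ->
  forall U : nat -> set (set X),
    (forall n V, U n V -> open V) ->
    (forall n, closure A `<=` \bigcup_(V in U n) V) ->
    exists F : nat -> set X,
      (forall n, finite_set (F n) /\ F n `<=` closure A) /\
      A `<=` \bigcup_n star (F n) (U n).

Definition discrete_subset {X : topologicalType} (A : set X) : Prop :=
  forall x, A x -> exists U : set X, open U /\ U `&` A = [set x].

Definition extent_countable (X : topologicalType) : Prop :=
  forall A : set X, closed A -> discrete_subset A -> countable A.

From HB Require Import structures.
From mathcomp Require Import all_boot all_order all_algebra.
From mathcomp Require Import all_classical all_reals topology.
Set Implicit Arguments. Unset Strict Implicit. Unset Printing Implicit Defensive.
Local Open Scope classical_set_scope.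

(* If X is set strongly star Menger and A is closed discrete, cover A by open
   sets each meeting A in one point: a star of a finite F <= A meets A only in
   F, so A is a countable union of finite sets.
   Conversely, in a T1 space, any closed B covered by an open family U
   contains a maximal subset D no member of U meets twice; D is closed
   discrete with B <= st(D, U), hence countable when e(X) = omega.  Listing D
   as (e_n k)_k for the n-th cover, every x in A picks indices h x in
   omega^omega with x in st(e_n (h x n), U_n).  As |X| < d, the family
   {h x | x in X} is not dominating: some g is not eventually above any h x,
   and F_n = {e_n k | k < g n} works. *)

Lemma star_subset T (A A' : set T) (U : set (set T)) :
  A `<=` A' -> star A U `<=` star A' U.
Proof.
move=> AA' x [V [UV [y [Vy Ay]]] Vx]; exists V => //; split => //.
by exists y; split => //; apply: AA'.
Qed.

Lemma star_range T I (e : I -> T) (U : set (set T)) x :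
  star (range e) U x -> exists i, star [set e i] U x.
Proof.
move=> [V [UV [y [Vy [i _ iy]]]] Vx]; subst y.
by exists i; exists V => //; split => //; exists (e i).
Qed.

Lemma star_isolating_cover T (A F : set T) (O : T -> set T) :
  (forall x, A x -> O x `&` A = [set x]) -> F `<=` A ->
  star F (O @` A) `&` A `<=` F.
Proof.
move=> OA FA a [[_ [[x Ax <-] [y [Oxy Fy]]] Oxa] Aa].
have /[!OA x Ax] xa : (O x `&` A) a by [].
have /[!OA x Ax] xy : (O x `&` A) y by split => //; apply: FA.
by rewrite xa -xy.
Qed.

Lemma countable_nonempty_range T (D : set T) :
  countable D -> D !=set0 -> exists e : nat -> T, range e = D.
Proof.
move=> /pfcard_geP[->|[f]]; first by case.
by move=> _; exists f; apply: image_eq.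
Qed.

Lemma set_strongly_star_Menger_extent_countable (X : topologicalType) :
  set_strongly_star_Menger X -> extent_countable X.
Proof.
move=> ssM A Acl Adisc.
have [->|/set0P A0] := eqVneq A set0; first exact: countable0.
have /choice[O OA] : forall x, exists O : set X, A x -> open O /\ O `&` A = [set x].
  move=> x; have [Ax|nAx] := pselect (A x); last by exists set0.
  by have [O] := Adisc x Ax; exists O.
have clA : closure A = A by rewrite -(closure_id A).1.
have Oopen V : (O @` A) V -> open V by move=> [x Ax <-]; case: (OA x Ax).
have Ocover : closure A `<=` \bigcup_(V in O @` A) V.
  move=> x; rewrite clA => Ax; exists (O x) => //.
  by have [] : (O x `&` A) x by rewrite (OA x Ax).2.
have [F [finF AF]] := ssM A A0 (fun=> O @` A) (fun=> Oopen) (fun=> Ocover).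
have FA n : F n `<=` A by rewrite -clA; case: (finF n).
apply: (@sub_countable _ _ _ (\bigcup_n F n)).
  apply: subset_card_le => a Aa; have [n _ stFa] := AF a Aa.
  exists n => //; apply: (star_isolating_cover (fun x Ax => (OA x Ax).2) (FA n)).
  by split.
apply: bigcup_countable => // n _.
by apply: finite_set_countable; case: (finF n).
Qed.

Definition separated_by {T} (U : set (set T)) (D : set T) :=
  forall V, U V -> forall x y, D x -> D y -> V x -> V y -> x = y.

Lemma exists_maximal_separated T (B : set T) (U : set (set T)) :
  exists D, [/\ D `<=` B, separated_by U D &
    forall C, D `<` C -> C `<=` B -> ~ separated_by U C].
Proof.
pose P D := D `<=` B /\ separated_by U D.
have [D [[DB Dsep] Dmax]] : exists D, P D /\ forall C, D `<` C -> ~ P C.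
  apply: Zorn_bigcup => F FP Ftot; split.
    by move=> x [Y FY Yx]; case: (FP Y FY) => + _; apply.
  move=> V UV x y [Y FY Yx] [Z FZ Zy] Vx Vy.
  have [YZ|ZY] := Ftot Y Z FY FZ.
  - by case: (FP Z FZ) => _ /(_ V UV x y (YZ _ Yx) Zy Vx Vy).
  - by case: (FP Y FY) => _ /(_ V UV x y Yx (ZY _ Zy) Vx Vy).
by exists D; split=> // C DC CB Csep; apply: (Dmax C DC).
Qed.

Lemma maximal_separated_star T (B D : set T) (U : set (set T)) :
  B `<=` \bigcup_(V in U) V -> D `<=` B -> separated_by U D ->
  (forall C, D `<` C -> C `<=` B -> ~ separated_by U C) ->
  B `<=` star D U.
Proof.
move=> Bcov DB Dsep Dmax b Bb; apply: contrapT => nb.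
have nDb : ~ D b.
  move=> Db; apply: nb; have [V UV Vb] := Bcov b Bb.
  by exists V => //; split => //; exists b.
apply: (Dmax (D `|` [set b])).
- by split; [move=> x Dx; left | move=> /(_ b (or_intror erefl))].
- by move=> x [/DB|->].
move=> V UV x y [Dx|->] [Dy|->] Vx Vy //.
- exact: Dsep V UV x y Dx Dy Vx Vy.
- by exfalso; apply: nb; exists V => //; split => //; exists x.
- by exfalso; apply: nb; exists V => //; split => //; exists y.
Qed.

Lemma closure_open_subsingleton (X : topologicalType) (D V : set X) p :
  accessible_space X -> open V -> V p -> closure D p ->
  (forall x y, D x -> D y -> V x -> V y -> x = y) -> D p.
Proof.
move=> T1 Vop Vp Dp DV.
have [d [Dd Vd]] := Dp V (open_nbhs_nbhs (conj Vop Vp)).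
have [<-//|dp] := eqVneq d p.
have [W [Wop /set_mem Wp /set_mem Wd]] := T1 p d ltac:(by rewrite eq_sym).
have VWp : open_nbhs p (V `&` W) by split; [exact: openI | split].
have [d' [Dd' [Vd' Wd']]] := Dp _ (open_nbhs_nbhs VWp).
by move: Wd; rewrite -(DV d' d Dd' Dd Vd' Vd).
Qed.

Section SeparatedKernel.
Variables (X : topologicalType) (B : set X) (U : set (set X)).
Hypotheses (Uop : forall V, U V -> open V) (Bcov : B `<=` \bigcup_(V in U) V).

Lemma separated_discrete (D : set X) :
  D `<=` B -> separated_by U D -> discrete_subset D.
Proof.
move=> DB Dsep x Dx; have [V UV Vx] := Bcov (DB x Dx).
exists V; split; first exact: Uop.
by apply/seteqP; split=> [y [Vy Dy]|y ->]; [exact: (Dsep V UV y x)|].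
Qed.

Lemma separated_closed (D : set X) : accessible_space X -> closed B ->
  D `<=` B -> separated_by U D -> closed D.
Proof.
move=> T1 Bcl DB Dsep p Dp.
have [V UV Vp] := Bcov (Bcl p (closureS DB Dp)).
exact: closure_open_subsingleton T1 (Uop UV) Vp Dp (Dsep V UV).
Qed.

Lemma closed_discrete_star_kernel : accessible_space X -> closed B ->
  exists D, [/\ D `<=` B, closed D, discrete_subset D & B `<=` star D U].
Proof.
move=> T1 Bcl; have [D [DB Dsep Dmax]] := exists_maximal_separated B U.
exists D; split=> //.
- exact: separated_closed.
- exact: separated_discrete.
- exact: maximal_separated_star.
Qed.

End SeparatedKernel.

Lemma extent_countable_star_range (X : topologicalType) (B : set X)
    (U : set (set X)) :
  accessible_space X -> extent_countable X -> closed B -> B !=set0 ->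
  (forall V, U V -> open V) -> B `<=` \bigcup_(V in U) V ->
  exists e : nat -> X, range e `<=` B /\ B `<=` star (range e) U.
Proof.
move=> T1 eX Bcl [b Bb] Uop Bcov.
have [D [DB Dcl Ddisc BD]] := closed_discrete_star_kernel Uop Bcov T1 Bcl.
have [V [_ [d [_ Dd]]] _] := BD b Bb.
have [e De] := countable_nonempty_range (eX D Dcl Ddisc) (ex_intro _ d Dd).
by exists e; rewrite De.
Qed.

Lemma card_lt_dominating_undominated (X : Type) (h : X -> nat -> nat) :
  card_lt_dominating X -> exists g, forall x, exists n, (h x n < g n)%N.
Proof.
move=> cX; apply: contrapT => nog.
have dom : dominating (range h).
  move=> g; apply: contrapT => ng; apply: nog; exists g => x.
  apply: contrapT => gx; apply: ng; exists (h x) => //; exists 0%N => n _.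
  by rewrite leqNgt; apply/negP => hg; apply: gx; exists n.
by have [_] := cX _ dom; apply; apply: card_image_le.
Qed.

Lemma extent_countable_set_strongly_star_Menger (X : topologicalType) :
  accessible_space X -> card_lt_dominating X ->
  extent_countable X -> set_strongly_star_Menger X.
Proof.
move=> T1 cX eX A A0 U Uop Ucov.
have clA0 : closure A !=set0 by case: A0 => a Aa; exists a; apply: subset_closure.
have /choice[e He] n : exists e : nat -> X,
    range e `<=` closure A /\ closure A `<=` star (range e) (U n).
  exact: extent_countable_star_range T1 eX (@closed_closure X A) clA0
    (Uop n) (Ucov n).
have /choice[h Hh] x : exists f : nat -> nat,
    forall n, A x -> star [set e n (f n)] (U n) x.
  have [Ax|nAx] := pselect (A x); last by exists (fun=> 0%N).
  have /choice[f Hf] n : exists k, star [set e n k] (U n) x.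
    exact: star_range ((He n).2 x (subset_closure Ax)).
  by exists f.
have [g Hg] := card_lt_dominating_undominated h cX.
exists (fun n => e n @` `I_(g n)); split.
  move=> n; split; first exact: finite_image.
  by move=> _ [k _ <-]; apply: (He n).1; exists k.
move=> x Ax; have [n hg] := Hg x.
exists n => //; apply: star_subset (Hh x n Ax) => _ ->.
by exists (h x n).
Qed.

Theorem corollary2p1 (X : topologicalType) :
  accessible_space X -> card_lt_dominating X ->
  (set_strongly_star_Menger X <-> extent_countable X).
Proof.
move=> T1 cX; split.
- exact: set_strongly_star_Menger_extent_countable.
- exact: extent_countable_set_strongly_star_Menger.
Qed.
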